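(* Let $\varPsi_{p,n}:=\varPsi_{p,n}(0)$ and $\vec\eta_{p,n}:=\vec e(\varPsi_{p,n})$ for $p\le n$. Then: (i) for all $p\le n$, $|\varPsi_{p,n}|=S^+_{p,n}$; (ii) for all $p<n<q$: almost surely on the event $\{\min_{h\in[p,q]}S_h=\min_{h\in[n,q]}S_h\}$ one has $\vec\eta_{p,q}=\vec\eta_{n,q}$; and almost surely on the event $\{\min_{h\in[p,n]}S_h=\min_{h\in[p,q]}S_h\}\cap\{S^+_{p,j}>0\ \forall j\in[n,q]\}$ one has $\vec\eta_{p,n}=\vec\eta_{p,q}$; (iii) with $T_{p,x}=\inf\{q\ge p:S_q-S_p=-|x|\}$, for all $p\le n$ and $x\in G_{\mathbb N}$, $$\varPsi_{p,n}(x)=(x+\vec e(x)S_{p,n})1_{\{n\le T_{p,x}\}}+\varPsi_{p,n}1_{\{n>T_{p,x}\}},$$ $$K_{p,n}(x)=E[\delta_{\varPsi_{p,n}(x)}\mid\sigma(S)]=\delta_{x+\vec e(x)S_{p,n}}1_{\{n\le T_{p,x}\}}+\sum_{i=1}^N\alpha_i\delta_{S^+_{p,n}\vec e_i}1_{\{n>T_{p,x}\}}.$$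
   Context: Fix $N\in\mathbb N^*$ and $\alpha_1,\dots,\alpha_N>0$ with $\sum_{i=1}^N\alpha_i=1$. $G$ is the graph consisting of $N$ half-lines $D_i=\{h\vec e_i:h\ge0\}$ emanating from $0$ ($\vec e_i$ distinct unit vectors), with metric $d(h\vec e_i,h'\vec e_j)=h+h'$ if $i\ne j$, $|h-h'|$ if $i=j$; $|x|:=d(x,0)$. Define $\vec e(z)=\vec e_i$ if $z\in D_i\setminus\{0\}$ and $\vec e(0)=\vec e_N$. $G_{\mathbb N}=\{x\in G:|x|\in\mathbb N\}$. $S=(S_n)_{n\in\mathbb Z}$ is a simple random walk on $\mathbb Z$ indexed by $\mathbb Z$ ($S_0=0$, $(S_n)_{n\ge0}$ and $(S_{-n})_{n\ge0}$ independent simple random walks), and $(\vec\eta_i)_{i\in\mathbb Z}$ is an i.i.d. sequence with law $\sum_i\alpha_i\delta_{\vec e_i}$, independent of $S$. For $p\le n$, $S_{p,n}=S_n-S_p$, $S^+_{p,n}=S_n-\min_{h\in[p,n]}S_h$. For $x\in G_{\mathbb N}$: $\varPsi_{p,p+1}(x)=x+\vec e(x)S_{p,p+1}$ if $x\ne0$, $\varPsi_{p,p+1}(0)=\vec\eta_pS^+_{p,p+1}$; $K_{p,p+1}(x)=\delta_{x+\vec e(x)S_{p,p+1}}$ if $x\ne0$, $K_{p,p+1}(0)=\sum_i\alpha_i\delta_{S^+_{p,p+1}\vec e_i}$. For $p<n$: $\varPsi_{p,n}=\varPsi_{n-1,n}\circ\cdots\circ\varPsi_{p,p+1}$, $K_{p,n}=K_{p,p+1}K_{p+1,p+2}\cdots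 K_{n-1,n}$ (with $KK'(x,A)=\sum_yK'(y,A)K(x,\{y\})$); $\varPsi_{p,p}(x)=x$, $K_{p,p}(x)=\delta_x$. *)

(* Star graph G with N = n0.+1 half-lines, random walk S,
   direction sequence eta; everything is stated pathwise. *)
From HB Require Import structures.
From mathcomp Require Import all_boot all_order all_algebra.
Set Implicit Arguments. Unset Strict Implicit. Unset Printing Implicit Defensive.
Import Order.TTheory GRing.Theory Num.Theory.
Local Open Scope ring_scope.

Section Star.
Variable n0 : nat.  (* N = n0.+1 ; direction e_i <-> i : 'I_N, e_N <-> ord_max *)

(* Points of G_N : None = origin, Some (i, h) = (h+1) e_i. *)
Definition gpt := option ('I_n0.+1 * nat).

Definition gabs (x : gpt) : nat := if x is Some (_, h) then h.+1 else 0%N.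

(* \vec e(x) ; \vec e(0) = \vec e_N *)
Definition edir (x : gpt) : 'I_n0.+1 := if x is Some (i, _) then i else ord_max.

Definition gmk (i : 'I_n0.+1) (h : nat) : gpt :=
  if h is h'.+1 then Some (i, h') else None.

(* x + \vec e(x) s  (only used when |x| + s >= 0; truncated at 0 otherwise) *)
Definition gshift (x : gpt) (s : int) : gpt :=
  match (gabs x)%:Z + s with Posz m => gmk (edir x) m | Negz _ => None end.

Definition smin (S : int -> int) (p q : int) : int :=
  \big[Num.min/S p]_(i < (absz (q - p)).+1) S (p + i%:Z).

Definition Splus (S : int -> int) (p q : int) : int := S q - smin S p q.

(* one-step flow \varPsi_{p,p+1} ; eta p is the index of \vec\eta_p *)
Definition Psi1 (S : int -> int) (eta : int -> 'I_n0.+1) (p : int) (x : gpt) : gpt :=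
  if x is None then gmk (eta p) (absz (Splus S p (p + 1)))
  else gshift x (S (p + 1) - S p).

Fixpoint PsiK (S : int -> int) (eta : int -> 'I_n0.+1) (p : int) (k : nat) (x : gpt) : gpt :=
  if k is k'.+1 then Psi1 S eta (p + k'%:Z) (PsiK S eta p k' x) else x.

Definition Psi S eta (p q : int) (x : gpt) : gpt := PsiK S eta p (absz (q - p)) x.

Definition Psi0 S eta (p q : int) : gpt := Psi S eta p q None.
Definition etapq S eta (p q : int) : 'I_n0.+1 := edir (Psi0 S eta p q).

(* Finitely supported measures on G_N as lists of weighted atoms. *)
Variable R : realFieldType.
Definition meas := seq (R * gpt).
Definition mass (m : meas) (y : gpt) : R := \sum_(a <- m | a.2 == y) a.1.

(* (mu K)(.) = sum_y mu({y}) K(y, .) *)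
Definition mbind (m : meas) (K : gpt -> meas) : meas :=
  flatten [seq [seq (a.1 * b.1, b.2) | b <- K a.2] | a <- m].

Definition K1 (alpha : 'I_n0.+1 -> R) (S : int -> int) (p : int) (x : gpt) : meas :=
  if x is None then [seq (alpha i, gmk i (absz (Splus S p (p + 1)))) | i <- enum 'I_n0.+1]
  else [:: (1, gshift x (S (p + 1) - S p))].

Fixpoint KK (alpha : 'I_n0.+1 -> R) (S : int -> int) (p : int) (k : nat) (x : gpt) : meas :=
  if k is k'.+1 then mbind (KK alpha S p k' x) (K1 alpha S (p + k'%:Z))
  else [:: (1, x)].

Definition Kpq alpha S (p q : int) (x : gpt) : meas := KK alpha S p (absz (q - p)) x.

Definition etaOf (p : int) (k : nat) (g : {ffun 'I_k -> 'I_n0.+1}) : int -> 'I_n0.+1 :=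
  fun t => match t - p with
           | Posz m => oapp g ord_max (insub m : option 'I_k)
           | Negz _ => ord_max end.

(* E[ delta_{\varPsi_{p,q}(x)} | sigma(S) ] : since \varPsi_{p,q}(x) depends on S and
   on eta_p..eta_{q-1}, which are i.i.d. with law sum_i alpha_i delta_{e_i} and
   independent of S, the conditional law is obtained by integrating over these. *)
Definition condlaw (alpha : 'I_n0.+1 -> R) (S : int -> int) (p q : int) (x : gpt) : meas :=
  [seq (\prod_(j < absz (q - p)) alpha (g j), Psi S (etaOf p g) p q x)
  | g : {ffun 'I_(absz (q - p)) -> 'I_n0.+1} <- enum {ffun 'I_(absz (q - p)) -> 'I_n0.+1}].

(* "T_{p,x} < q" where T_{p,x} = inf{ r >= p : S_r - S_p = -|x| } *)
Definition Tlt (S : int -> int) (p : int) (x : gpt) (q : int) : bool :=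
  [exists i : 'I_(absz (q - p)), S (p + (i : nat)%:Z) - S p == - (gabs x)%:Z].

End Star.

From HB Require Import structures.
From mathcomp Require Import all_boot all_order all_algebra zify.
Set Implicit Arguments. Unset Strict Implicit. Unset Printing Implicit Defensive.
Import Order.TTheory GRing.Theory Num.Theory.
Local Open Scope ring_scope.

(* The distance to the origin of the flow started at 0 obeys Lindley's
   recursion h |-> max (h + (S_{n+1} - S_n)) 0, exactly as S^+_{p,n} does;
   this is (i).  A point x <> 0 is carried rigidly along its half-line until
   the hitting time T_{p,x}; at that time S^+_{p,.} vanishes, so the flow from
   0 is at the origin as well, and by the cocycle property both flows agree
   afterwards.  The flow from 0 therefore changes half-line only at zeros of
   S^+_{p,.}, and its direction at time n is eta_L for the last zero L < n.
   Both parts of (ii) follow, and integrating out the i.i.d. directions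
   (of which only eta_L matters) gives the formula for K_{p,n}. *)

Lemma abszDKl (p : int) (k : nat) : absz (p + k%:Z - p)%R = k.
Proof. lia. Qed.

Lemma addz_absz_sub (p n : int) : p <= n -> n = p + (absz (n - p))%:Z.
Proof. lia. Qed.

Lemma addzS (p : int) (k : nat) : p + k%:Z + 1 = p + k.+1%:Z.
Proof. lia. Qed.

Lemma le_int_ind (p : int) (P : int -> Prop) :
  P p -> (forall n, p <= n -> P n -> P (n + 1)) -> forall n, p <= n -> P n.
Proof.
move=> Pp PS n /addz_absz_sub ->; elim: (absz _) => [|k IH]; first by rewrite addr0.
by rewrite -addzS; apply: PS => //; lia.
Qed.

Lemma bigmin_ord_recr (x : int) n (F : nat -> int) :
  \big[Num.min/x]_(i < n.+1) F i = Num.min (\big[Num.min/x]_(i < n) F i) (F n).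
Proof.
elim: n F => [|n IH] F.
  by rewrite (big_ord_recl (op := Num.min)) !big_ord0 minC.
rewrite (big_ord_recl (op := Num.min)) (IH (fun i => F i.+1)).
by rewrite [in RHS](big_ord_recl (op := Num.min)) minA.
Qed.

Lemma exists_ordS (P : nat -> bool) k :
  [exists i : 'I_k.+1, P i] = [exists i : 'I_k, P i] || P k.
Proof.
apply/existsP/orP => [[i Pi] | [/existsP [i Pi] | Pk]].
- have [ik | ki] := ltnP i k; first by left; apply/existsP; exists (Ordinal ik).
  by right; suff -> : k = i by []; apply/eqP; rewrite eqn_leq ki -ltnS ltn_ord.
- by exists (widen_ord (leqnSn k) i).
- by exists ord_max.
Qed.

Section StarGraph.
Variable n0 : nat.
Implicit Types (x : gpt n0) (i : 'I_n0.+1).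

Lemma gabs_gmk i m : gabs (gmk i m) = m.
Proof. by case: m. Qed.

Lemma edir_gmk i m : (0 < m)%N -> edir (gmk i m) = i.
Proof. by case: m. Qed.

Lemma gabs_eq0 x : gabs x = 0%N -> x = None.
Proof. by case: x => // [[]]. Qed.

Lemma gshiftE x s : 0 <= (gabs x)%:Z + s ->
  gshift x s = gmk (edir x) (absz ((gabs x)%:Z + s)).
Proof. by rewrite /gshift; case: (_ + s). Qed.

Lemma gabs_gshift x s : 0 <= (gabs x)%:Z + s -> (gabs (gshift x s))%:Z = (gabs x)%:Z + s.
Proof. by move=> h; rewrite gshiftE // gabs_gmk; lia. Qed.

Lemma edir_gshift x s : (0 < gabs (gshift x s))%N -> edir (gshift x s) = edir x.
Proof. by rewrite /gshift; case: (_ + s) => // m; rewrite gabs_gmk => /edir_gmk. Qed.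

Lemma gshift0 x : gshift x 0 = x.
Proof. by case: x => [[i h]|]; rewrite /gshift addr0. Qed.

Lemma gshift_eq_None x s : (gabs x)%:Z + s = 0 -> gshift x s = None.
Proof. by rewrite /gshift => ->. Qed.

Lemma gshiftD x a b : 0 < (gabs x)%:Z + a -> gshift (gshift x a) b = gshift x (a + b).
Proof.
move=> h; rewrite [gshift x a]gshiftE ?ltW // /gshift gabs_gmk edir_gmk; last by lia.
by rewrite (_ : (absz _)%:Z = (gabs x)%:Z + a) ?addrA //; lia.
Qed.

Section Walk.
Variable S : int -> int.
Implicit Types (p q n j t : int).

Lemma smin_id p : smin S p p = S p.
Proof.
by rewrite /smin subrr (bigmin_ord_recr _ 0 (fun m => S (p + m%:Z))) big_ord0 addr0 minxx.
Qed.

Lemma smin_succ p n : p <= n -> smin S p (n + 1) = Num.min (smin S p n) (S (n + 1)).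
Proof.
move=> /addz_absz_sub ->; move: (absz _) => k.
by rewrite /smin addzS !abszDKl (bigmin_ord_recr _ k.+1 (fun m => S (p + m%:Z))).
Qed.

Lemma smin_le p q j : p <= j <= q -> smin S p q <= S j.
Proof.
case/andP=> pj jq; have pq := le_trans pj jq; move: q pq jq; apply: le_int_ind => [jp|q pq IH].
  by rewrite smin_id (_ : j = p) //; lia.
rewrite smin_succ // ge_min le_eqVlt ltzD1 => /orP [/eqP ->|/IH ->//].
by rewrite lexx orbT.
Qed.

Lemma smin_le_last p n : p <= n -> smin S p n <= S n.
Proof. by move=> pn; rewrite smin_le // pn lexx. Qed.

Lemma smin_attained p q : p <= q -> exists2 j, p <= j <= q & S j = smin S p q.
Proof.
move: q; apply: le_int_ind => [|q pq [j jb Sj]]; first by exists p; rewrite ?lexx ?smin_id.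
rewrite smin_succ //; case: (leP (smin S p q) (S (q + 1))) => h.
  by exists j => //; lia.
by exists (q + 1) => //; lia.
Qed.

Lemma smin_le_sub p a b q : p <= a -> a <= b -> b <= q -> smin S p q <= smin S a b.
Proof.
move=> pa ab bq; have [j jb <-] := smin_attained ab.
by apply: smin_le; lia.
Qed.

Lemma Splus_id p : Splus S p p = 0.
Proof. by rewrite /Splus smin_id subrr. Qed.

Lemma Splus_ge0 p q : p <= q -> 0 <= Splus S p q.
Proof. by move=> pq; rewrite subr_ge0 smin_le // pq lexx. Qed.

Lemma Splus_succ p n : p <= n ->
  Splus S p (n + 1) = Num.max (Splus S p n + (S (n + 1) - S n)) 0.
Proof. by move=> pn; rewrite /Splus smin_succ //; lia. Qed.

Lemma Splus_restart p n : p <= n -> Splus S p n = 0 -> Splus S p (n + 1) = Splus S n (n + 1).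
Proof. by move=> pn e; rewrite !Splus_succ ?lexx // e Splus_id. Qed.

Lemma Tlt_id p x : Tlt S p x p = false.
Proof. by rewrite /Tlt subrr; apply/existsP => [[[]]]. Qed.

Lemma Tlt_succ p x n : p <= n ->
  Tlt S p x (n + 1) = Tlt S p x n || (S n - S p == - (gabs x)%:Z).
Proof.
move=> /addz_absz_sub ->; move: (absz _) => k.
by rewrite /Tlt addzS !abszDKl (exists_ordS (fun m => S (p + m%:Z) - S p == - (gabs x)%:Z)).
Qed.

Hypothesis S_step : forall t : int, `|S (t + 1) - S t| = 1.

Lemma S_step_ge t : -1 <= S (t + 1) - S t.
Proof.
have : `|S (t + 1) - S t| <= 1 by rewrite S_step.
by rewrite ler_norml => /andP [].
Qed.

Lemma Splus_succ_pos p n : p <= n -> 0 < Splus S p n ->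
  Splus S p (n + 1) = Splus S p n + (S (n + 1) - S n).
Proof. by move=> pn h; rewrite Splus_succ //; have st := S_step_ge n; lia. Qed.

Lemma gshift_gmk_Splus i p n : p <= n -> 0 < Splus S p n ->
  gshift (gmk i (absz (Splus S p n))) (S (n + 1) - S n) = gmk i (absz (Splus S p (n + 1))).
Proof.
move=> pn pos; have st := S_step_ge n; have m_pos : (0 < absz (Splus S p n))%N by lia.
rewrite gshiftE gabs_gmk; last by lia.
by rewrite (edir_gmk i m_pos) Splus_succ_pos //; congr gmk; lia.
Qed.

Lemma smin_before_hit p x n : p <= n -> ~~ Tlt S p x n -> S p - (gabs x)%:Z <= smin S p n.
Proof.
move: n; apply: le_int_ind => [_|n pn IH]; first by rewrite smin_id; lia.
rewrite Tlt_succ // negb_or => /andP [/IH lo /eqP ne].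
have hi := smin_le_last pn.
by rewrite smin_succ // le_min lo /=; have st := S_step_ge n; lia.
Qed.

Lemma shift_pos_before_hit p x n : p <= n -> ~~ Tlt S p x n ->
  S n - S p != - (gabs x)%:Z -> 0 < (gabs x)%:Z + (S n - S p).
Proof.
move=> pn nh /eqP ne; have lo := smin_before_hit pn nh; have hi := smin_le_last pn.
lia.
Qed.

Lemma Splus_at_hit p x n : p <= n -> ~~ Tlt S p x n ->
  S n - S p = - (gabs x)%:Z -> Splus S p n = 0.
Proof.
move=> pn nh e; have lo := smin_before_hit pn nh; have hi := smin_le_last pn.
rewrite /Splus; lia.
Qed.

Section Flow.
Variable eta : int -> 'I_n0.+1.

Lemma Psi1_pos t x : (0 < gabs x)%N -> Psi1 S eta t x = gshift x (S (t + 1) - S t).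
Proof. by case: x. Qed.

Lemma PsiKD p a b x : PsiK S eta p (a + b) x = PsiK S eta (p + a%:Z) b (PsiK S eta p a x).
Proof. by elim: b => [|b IH]; rewrite ?addn0 // addnS /= IH PoszD addrA. Qed.

Lemma Psi_id p x : Psi S eta p p x = x.
Proof. by rewrite /Psi subrr. Qed.

Lemma Psi_comp p m q x : p <= m -> m <= q -> Psi S eta p q x = Psi S eta m q (Psi S eta p m x).
Proof.
move=> pm mq; rewrite /Psi (_ : absz (q - p) = absz (m - p) + absz (q - m))%N; last by lia.
by rewrite PsiKD -addz_absz_sub.
Qed.

Lemma Psi_succ p n x : p <= n -> Psi S eta p (n + 1) x = Psi1 S eta n (Psi S eta p n x).
Proof.
move=> pn; rewrite (Psi_comp _ pn) ?lerDl //.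
by rewrite {1}/Psi (addrC n) addrK /= addr0.
Qed.

Lemma gabs_Psi0 p n : p <= n -> (gabs (Psi0 S eta p n))%:Z = Splus S p n.
Proof.
move: n; apply: le_int_ind => [|n pn IH]; first by rewrite /Psi0 Psi_id Splus_id.
have st := S_step_ge n.
rewrite /Psi0 Psi_succ // -/(Psi0 S eta p n) Splus_succ // -IH.
case: (Psi0 S eta p n) => [[i h]|] /=; first by rewrite gabs_gshift /=; lia.
by rewrite gabs_gmk Splus_succ ?lexx // Splus_id; lia.
Qed.

Lemma Psi0_eq_None p n : p <= n -> Splus S p n = 0 -> Psi0 S eta p n = None.
Proof. by move=> pn e; apply/gabs_eq0/eqP; rewrite -eqz_nat gabs_Psi0 // e. Qed.

Lemma etapq_merge p n q : p <= n -> n <= q -> smin S p q = smin S n q ->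
  etapq S eta p q = etapq S eta n q.
Proof.
move=> pn nq e; have [j /andP [nj jq] Sj] := smin_attained nq.
have Psi0_j a : a <= j -> S j = smin S a q -> Psi0 S eta a j = None.
  move=> aj Saq; apply: Psi0_eq_None => //.
  have lo := smin_le_sub (lexx a) aj jq; have hi := smin_le_last aj.
  by rewrite /Splus; lia.
have pj : p <= j by lia.
rewrite /etapq /Psi0 (Psi_comp _ pj jq) (Psi_comp _ nj jq) -!/(Psi0 _ _ _ _).
by rewrite (Psi0_j n nj Sj) (Psi0_j p pj); last by rewrite e.
Qed.

Lemma edir_Psi1 t x : (0 < gabs x)%N -> (0 < gabs (Psi1 S eta t x))%N ->
  edir (Psi1 S eta t x) = edir x.
Proof. by move=> x_pos; rewrite Psi1_pos //; apply: edir_gshift. Qed.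

Lemma etapq_pos p n q : p <= n -> n <= q -> (forall j, n <= j <= q -> 0 < Splus S p j) ->
  etapq S eta p n = etapq S eta p q.
Proof.
move=> pn; move: q; apply: le_int_ind => [//|q nq IH pos].
have Psi0_pos j : n <= j <= q + 1 -> (0 < gabs (Psi0 S eta p j))%N.
  by move=> jb; rewrite -ltz_nat gabs_Psi0 ?pos //; lia.
have pq : p <= q by lia.
rewrite IH => [|j jb]; last by apply: pos; lia.
rewrite /etapq /Psi0 Psi_succ // edir_Psi1 //; first by apply: Psi0_pos; lia.
by rewrite -Psi_succ //; apply: Psi0_pos; lia.
Qed.

Lemma Psi_before_hit p x n : p <= n -> ~~ Tlt S p x n -> Psi S eta p n x = gshift x (S n - S p).
Proof.
move: n; apply: le_int_ind => [_|n pn IH]; first by rewrite Psi_id subrr gshift0.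
rewrite Tlt_succ // negb_or => /andP [nh ne].
have pos := shift_pos_before_hit pn nh ne.
rewrite Psi_succ // IH // Psi1_pos; last by rewrite -ltz_nat gabs_gshift ?ltW.
by rewrite gshiftD //; congr gshift; lia.
Qed.

Lemma Psi_after_hit p x n : p <= n -> Tlt S p x n -> Psi S eta p n x = Psi0 S eta p n.
Proof.
move: n; apply: le_int_ind => [|n pn IH]; first by rewrite Tlt_id.
rewrite Tlt_succ // /Psi0 !Psi_succ //.
case: (boolP (Tlt S p x n)) => [/IH -> // | nh /= /eqP e]; congr (Psi1 _ _ _ _).
rewrite Psi_before_hit // e gshift_eq_None ?addrN //.
by rewrite -/(Psi0 S eta p n) Psi0_eq_None // (Splus_at_hit pn nh e).
Qed.

Lemma Psi_hit_dichotomy p x n : p <= n ->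
  Psi S eta p n x = if ~~ Tlt S p x n then gshift x (S n - S p) else Psi0 S eta p n.
Proof.
by move=> pn; case: ifPn => [|/negPn]; [exact: Psi_before_hit | exact: Psi_after_hit].
Qed.

End Flow.

Lemma Psi0_last_zero p n : p < n -> exists2 L, p <= L < n &
  forall eta : int -> 'I_n0.+1, Psi0 S eta p n = gmk (eta L) (absz (Splus S p n)).
Proof.
rewrite -lezD1; move: n; apply: le_int_ind => [|n pn [L Lb HL]].
  by exists p; [lia | move=> eta; rewrite /Psi0 Psi_succ ?lexx // Psi_id].
have pn' : p <= n by lia.
have [z0 | nz] := eqVneq (Splus S p n) 0.
  exists n; first lia.
  by move=> eta; rewrite /Psi0 Psi_succ // -/(Psi0 S eta p n) HL z0 /= Splus_restart.
have pos : 0 < Splus S p n by rewrite lt_def nz Splus_ge0.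
exists L; first lia.
move=> eta; rewrite /Psi0 Psi_succ // -/(Psi0 S eta p n) HL.
by rewrite Psi1_pos ?gshift_gmk_Splus // gabs_gmk; lia.
Qed.

Section Kernels.
Variables (R : realFieldType) (alpha : 'I_n0.+1 -> R).
Hypothesis alpha_sum : \sum_i alpha i = 1.

Definition integral (m : meas n0 R) (f : gpt n0 -> R) : R := \sum_(a <- m) a.1 * f a.2.

Lemma mass_integral m y : mass m y = integral m (fun z => (z == y)%:R).
Proof.
rewrite /mass /integral big_mkcond; apply: eq_bigr => a _.
by case: eqP; rewrite ?mulr1 ?mulr0.
Qed.

Lemma integral_mbind m K f : integral (mbind m K) f = integral m (fun z => integral (K z) f).
Proof.
rewrite /integral /mbind big_flatten big_map; apply: eq_bigr => a _.
by rewrite big_map big_distrr; apply: eq_bigr => b _ /=; rewrite mulrA.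
Qed.

Lemma integral_dirac y f : integral [:: (1, y)] f = f y.
Proof. by rewrite /integral big_seq1 mul1r. Qed.

Lemma integral_map_enum (T : finType) (w : T -> R) (y : T -> gpt n0) f :
  integral [seq (w a, y a) | a <- enum T] f = \sum_a w a * f (y a).
Proof. by rewrite /integral big_map big_enum. Qed.

Lemma K1_pos t x : (0 < gabs x)%N -> K1 alpha S t x = [:: (1, gshift x (S (t + 1) - S t))].
Proof. by case: x. Qed.

Lemma Kpq_id p x : Kpq alpha S p p x = [:: (1, x)].
Proof. by rewrite /Kpq subrr. Qed.

Lemma Kpq_succ p n x : p <= n ->
  Kpq alpha S p (n + 1) x = mbind (Kpq alpha S p n x) (K1 alpha S n).
Proof. by move=> /addz_absz_sub ->; rewrite /Kpq addzS !abszDKl. Qed.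

Definition hit_law p x n : meas n0 R :=
  if ~~ Tlt S p x n then [:: (1, gshift x (S n - S p))]
  else [seq (alpha i, gmk i (absz (Splus S p n))) | i <- enum 'I_n0.+1].

Lemma sum_alpha_const (c : R) : \sum_i alpha i * c = c.
Proof. by rewrite -big_distrl /= alpha_sum mul1r. Qed.

Lemma integral_K1_hit_law p x n f : p <= n ->
  integral (hit_law p x n) (fun z => integral (K1 alpha S n z) f) = integral (hit_law p x (n + 1)) f.
Proof.
move=> pn; rewrite /hit_law Tlt_succ //; case: (boolP (Tlt S p x n)) => [_ | nh] /=.
  rewrite !integral_map_enum; have [z0 | nz] := eqVneq (Splus S p n) 0.
    by rewrite z0 /= sum_alpha_const /K1 integral_map_enum Splus_restart.
  have pos : 0 < Splus S p n by rewrite lt_def nz Splus_ge0.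
  apply: eq_bigr => i _; rewrite K1_pos ?gshift_gmk_Splus ?integral_dirac //.
  by rewrite gabs_gmk; lia.
case: eqP => [e | /eqP ne] /=.
  rewrite integral_dirac gshift_eq_None; last by rewrite e addrN.
  by rewrite /K1 (Splus_restart pn (Splus_at_hit pn nh e)).
have pos := shift_pos_before_hit pn nh ne.
rewrite !integral_dirac K1_pos ?integral_dirac; last by rewrite -ltz_nat gabs_gshift ?ltW.
by rewrite gshiftD //; congr (f (gshift _ _)); lia.
Qed.

Lemma integral_Kpq p x n f : p <= n ->
  integral (Kpq alpha S p n x) f = integral (hit_law p x n) f.
Proof.
move=> pn; elim/le_int_ind: n / pn f => [f | n pn IH f].
  by rewrite Kpq_id /hit_law Tlt_id /= subrr gshift0.
by rewrite Kpq_succ // integral_mbind IH integral_K1_hit_law.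
Qed.

Lemma sum_prod_alpha k : \sum_(g : {ffun 'I_k -> 'I_n0.+1}) \prod_(j < k) alpha (g j) = 1.
Proof.
rewrite -(bigA_distr_bigA (fun (j : 'I_k) i => alpha i)) /=.
by rewrite big1 // => j _; rewrite alpha_sum.
Qed.

Lemma sum_prod_alpha_marginal k (j0 : 'I_k) (h : 'I_n0.+1 -> R) :
  \sum_(g : {ffun 'I_k -> 'I_n0.+1}) (\prod_(j < k) alpha (g j)) * h (g j0)
  = \sum_i alpha i * h i.
Proof.
pose F (l : 'I_k) i := if l == j0 then alpha i * h i else alpha i.
rewrite (eq_bigr (fun g : {ffun _ -> _} => \prod_(l < k) F l (g l))) => [|g _]; last first.
  rewrite (bigD1 j0) //= [RHS](bigD1 j0) //= /F eqxx mulrAC; congr (_ * _).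
  by apply: eq_bigr => l /negbTE ->.
rewrite -(bigA_distr_bigA F) /= (bigD1 j0) //= [X in _ * X]big1 ?mulr1 => [|l /negbTE nl].
  by apply: eq_bigr => i _; rewrite /F eqxx.
by rewrite -[RHS]alpha_sum; apply: eq_bigr => i _; rewrite /F nl.
Qed.

Lemma etaOf_nat p k (g : {ffun 'I_k -> 'I_n0.+1}) (j : nat) (jk : (j < k)%N) :
  etaOf p g (p + j%:Z) = g (Ordinal jk).
Proof. by rewrite /etaOf addrC addKr /= insubT. Qed.

Lemma integral_condlaw p x n f : p <= n ->
  integral (condlaw alpha S p n x) f = integral (hit_law p x n) f.
Proof.
move=> pn; rewrite /condlaw integral_map_enum.
under eq_bigr => g _ do rewrite Psi_hit_dichotomy //.
rewrite /hit_law; case: ifPn => [_ | /negPn hit].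
  by rewrite -big_distrl /= sum_prod_alpha mul1r integral_dirac.
have pn' : p < n by rewrite lt_neqAle pn andbT; apply: contraTneq hit => <-; rewrite Tlt_id.
have [L Lb HL] := Psi0_last_zero pn'.
have Lk : (absz (L - p) < absz (n - p))%N by lia.
have eL : L = p + (absz (L - p))%:Z by lia.
under eq_bigr => g _ do rewrite HL {1}eL (etaOf_nat p g Lk).
by rewrite (sum_prod_alpha_marginal (Ordinal Lk) (fun i => f (gmk i _))) integral_map_enum.
Qed.

End Kernels.
End Walk.
End StarGraph.

Theorem proposition3 (n0 : nat) (R : realFieldType) (alpha : 'I_n0.+1 -> R)
  (alpha_pos : forall i, 0 < alpha i) (alpha_sum : \sum_i alpha i = 1)
  (S : int -> int) (S0 : S 0 = 0)
  (Sstep : forall t : int, `|S (t + 1) - S t| = 1)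
  (eta : int -> 'I_n0.+1) :
  (* (i) *)
  (forall p n : int, p <= n -> (gabs (Psi0 S eta p n))%:Z = Splus S p n)
  /\
  (* (ii) *)
  (forall p n q : int, p < n -> n < q ->
     (smin S p q = smin S n q -> etapq S eta p q = etapq S eta n q)
     /\ (smin S p n = smin S p q ->
         (forall j : int, n <= j <= q -> 0 < Splus S p j) ->
         etapq S eta p n = etapq S eta p q))
  /\
  (* (iii) *)
  (forall (p n : int) (x : gpt n0), p <= n ->
     Psi S eta p n x =
       (if ~~ Tlt S p x n then gshift x (S n - S p) else Psi0 S eta p n)
     /\ (forall y : gpt n0,
          mass (Kpq alpha S p n x) y = mass (condlaw alpha S p n x) y
          /\ mass (condlaw alpha S p n x) y =
             mass (if ~~ Tlt S p x n then [:: (1, gshift x (S n - S p))]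
                   else [seq (alpha i, gmk i (absz (Splus S p n))) | i <- enum 'I_n0.+1]) y)).
Proof.
split; first exact: gabs_Psi0.
split.
  move=> p n q /ltW pn /ltW nq; split; first exact: etapq_merge.
  by move=> _; apply: etapq_pos.
move=> p n x pn; split; first exact: Psi_hit_dichotomy.
by move=> y; rewrite !mass_integral integral_Kpq // integral_condlaw.
Qed.
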